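(* Let $n\ge 1$ be an integer. Consider the graph consisting of two disjoint copies of the star $K_{1,n}$ together with one additional edge joining their two centres, where one centre is tinted blue, the other centre is tinted red, and all leaves are untinted. The game value of \textsc{Snort} played on this position is $\pm n=\{n\mid -n\}$ if $n$ is even, and $\pm(n* )=\{\,n+* \mid -n+*\,\}$ if $n$ is odd.
   Context: \textsc{Snort} is a two-player normal-play combinatorial game (the player unable to move loses) between Left (blue) and Right (red), played on a finite simple graph in which each vertex may be tinted blue, tinted red, or untinted. Left may move on any vertex not tinted red; Right may move on any vertex not tinted blue. A move on vertex $v$ deletes $v$ and tints all neighbours of $v$ in the mover's colour; any vertex that thereby becomes tinted in both colours is deleted. Game values are in the standard sense of combinatorial game theory: $\{A \mid B\}$ denotes the game with Left options $A$ and Right options $B$, $*=\{0\mid 0\}$, $n*$ denotes the sum $n+*$, and $\pm G$ denotes $\{G\mid -G\}$. $K_{1,n}$ is the star with one centre vertex adjacent to $n$ leaves. *)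

From mathcomp Require Import all_boot.
Set Implicit Arguments. Unset Strict Implicit. Unset Printing Implicit Defensive.

(** * Short combinatorial games (game trees, not yet quotiented) *)
Inductive game : Type := Game of seq game & seq game.

Definition leftopts (g : game) := let: Game L _ := g in L.
Definition rightopts (g : game) := let: Game _ R := g in R.

Fixpoint gsize (g : game) : nat :=
  let: Game L R := g in (sumn (map gsize L) + sumn (map gsize R)).+1.

(* Defined with fuel; the fuel
   gsize g + gsize h is always sufficient (each recursive call strictly
   decreases the total size). *)
Fixpoint le_fuel (k : nat) (g h : game) : bool :=
  match k with
  | 0 => true
  | k'.+1 =>
      ~~ has (fun gl => le_fuel k' h gl) (leftopts g) &&
      ~~ has (fun hr => le_fuel k' hr g) (rightopts h)
  end.

Definition game_le (g h : game) : bool := le_fuel (gsize g + gsize h) g h.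

Definition game_eq (g h : game) : bool := game_le g h && game_le h g.

Fixpoint game_neg (g : game) : game :=
  let: Game L R := g in Game (map game_neg R) (map game_neg L).

Fixpoint game_add (g h : game) {struct g} : game :=
  let fix addg (h : game) : game :=
    let: Game HL HR := h in
    Game (map (fun gl => game_add gl h) (leftopts g) ++ map addg HL)
         (map (fun gr => game_add gr h) (rightopts g) ++ map addg HR)
  in addg h.

Definition game0 : game := Game [::] [::].
Fixpoint game_nat (n : nat) : game :=
  if n is n'.+1 then Game [:: game_nat n'] [::] else game0.
Definition game_star : game := Game [:: game0] [:: game0].
Definition game_pm (g : game) : game := Game [:: g] [:: game_neg g].

Section Snort.
Variables (T : finType) (e : rel T).

(* A position: the set V of remaining vertices of the fixed simple graph
   (T, e) (the position is the induced subgraph on V), and the sets of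
   blue-tinted and red-tinted vertices. *)
Definition nbhd (V : {set T}) (v : T) : {set T} := [set u in V | e v u].

(* Left moves on v: delete v, tint neighbours blue, delete neighbours that
   were red (now tinted in both colours). *)
Definition left_move (V B Rd : {set T}) (v : T) :=
  (((V :\ v) :\: (nbhd V v :&: Rd)), B :|: nbhd V v, Rd).
Definition right_move (V B Rd : {set T}) (v : T) :=
  (((V :\ v) :\: (nbhd V v :&: B)), B, Rd :|: nbhd V v).

Fixpoint snort_fuel (k : nat) (V B Rd : {set T}) : game :=
  match k with
  | 0 => game0
  | k'.+1 =>
    Game [seq (let: (V', B', R') := left_move V B Rd v in snort_fuel k' V' B' R')
           | v <- enum V & v \notin Rd]
         [seq (let: (V', B', R') := right_move V B Rd v in snort_fuel k' V' B' R')
           | v <- enum V & v \notin B]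
  end.

(* game value of Snort on the position (induced subgraph on V, tints B, Rd);
   fuel #|V| suffices since every move deletes at least one vertex. *)
Definition snort (V B Rd : {set T}) : game := snort_fuel #|V| V B Rd.
End Snort.

(** * The specific position: two copies of K_{1,n} with centres joined.
   Vertices (c, i) with c : bool the copy, i : 'I_n.+1, i = 0 the centre. *)
Definition two_stars_edge (n : nat) : rel (bool * 'I_n.+1) :=
  fun x y =>
    ((x.1 == y.1) && ((val x.2 == 0) != (val y.2 == 0)))
    || ((x.1 != y.1) && (val x.2 == 0) && (val y.2 == 0)).

Arguments two_stars_edge n : clear implicits.

Definition two_stars_value (n : nat) : game :=
  snort (two_stars_edge n) [set: bool * 'I_n.+1]
        [set (true, ord0)] [set (false, ord0)].

(* Let G be the position, with Left's centre blue and Right's centre red, and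
   H = n + n.* (that is n for even n and n + * for odd n).  Left has three
   kinds of moves.  On her centre, the red centre becomes doubly tinted and
   disappears, leaving n blue and n untinted isolated leaves, worth exactly H.
   On one of her leaves, Right answers on his centre, which removes her centre
   and leaves n red and n-1 untinted isolated leaves, worth -n + (n-1).* <= +-H.
   On a leaf of Right's star, his centre disappears and what remains is her
   star, worth at most n + *, next to n-1 untinted leaves, so at most H.  Hence
   H is Left's best option and no option of Left is >= +-H.  Swapping colours
   maps G to -G, so Right's options mirror Left's and G = {H | -H}.  The
   general tools are that Snort on two non-adjacent parts is the disjunctive
   sum of the parts, and that an independent set with a blue, b red and c
   untinted vertices is worth a - b + c.*. *)

From HB Require Import structures.
From mathcomp Require Import all_boot zify.
Set Implicit Arguments. Unset Strict Implicit. Unset Printing Implicit Defensive.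

Notation "g <=G h" := (game_le g h) (at level 70).
Notation "g ==G h" := (game_eq g h) (at level 70).
Notation "g +G h" := (game_add g h) (at level 50, left associativity).

(* The encoding into trees only serves to give [game] an eqType structure, so
   that membership [\in] is available on lists of options. *)
Fixpoint tree_of_game (g : game) : GenTree.tree unit :=
  let: Game L R := g in
  GenTree.Node 0 [:: GenTree.Node 0 (map tree_of_game L);
                     GenTree.Node 0 (map tree_of_game R)].

Fixpoint game_of_tree (t : GenTree.tree unit) : game :=
  if t is GenTree.Node _ [:: GenTree.Node _ L; GenTree.Node _ R]
  then Game (map game_of_tree L) (map game_of_tree R) else game0.

Fixpoint tree_of_gameK (g : game) : game_of_tree (tree_of_game g) = g :=
  let: Game L R := g in
  let fix mapK s : map game_of_tree (map tree_of_game s) = s :=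
    if s is x :: s' then congr2 cons (tree_of_gameK x) (mapK s') else erefl in
  congr2 Game (mapK L) (mapK R).

HB.instance Definition _ := Countable.copy game (can_type tree_of_gameK).

Lemma gsize_le_sumn s x : x \in s -> gsize x <= sumn (map gsize s).
Proof. by elim: s => //= y s IH; rewrite in_cons => /predU1P[->|/IH]; lia. Qed.

Lemma gsize_gt0 g : 0 < gsize g. Proof. by case: g. Qed.

Lemma gsize_leftopt g x : x \in leftopts g -> gsize x < gsize g.
Proof. by case: g => L R /= /gsize_le_sumn; lia. Qed.

Lemma gsize_rightopt g x : x \in rightopts g -> gsize x < gsize g.
Proof. by case: g => L R /= /gsize_le_sumn; lia. Qed.

Ltac gsize_lia :=
  repeat match goal with
  | H : is_true (_ \in leftopts _) |- _ => move: (gsize_leftopt H); clear H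
  | H : is_true (_ \in rightopts _) |- _ => move: (gsize_rightopt H); clear H
  end; lia.

Lemma gsize_ind3 (P : game -> game -> game -> Prop) :
  (forall g h k, (forall g' h' k', gsize g' + gsize h' + gsize k' <
                   gsize g + gsize h + gsize k -> P g' h' k') -> P g h k) ->
  forall g h k, P g h k.
Proof.
move=> IH g h k; have [m] := ubnP (gsize g + gsize h + gsize k).
elim: m g h k => [|m IHm] g h k // /ltnSE hm.
by apply: IH => g' h' k' lt; apply: IHm; lia.
Qed.

Lemma gsize_ind2 (P : game -> game -> Prop) :
  (forall g h, (forall g' h', gsize g' + gsize h' < gsize g + gsize h -> P g' h') ->
     P g h) ->
  forall g h, P g h.
Proof.
move=> IH g h; apply: (@gsize_ind3 (fun g h _ => P g h) _ g h game0) => {}g {}h k IH'.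
by apply: IH => g' h' lt; apply: (IH' _ _ k); lia.
Qed.

Lemma game_ind_in (P : game -> Prop) :
  (forall L R, {in L, forall x, P x} -> {in R, forall x, P x} -> P (Game L R)) ->
  forall g, P g.
Proof.
move=> IH g; apply: (@gsize_ind2 (fun g _ => P g) _ g game0) => -[L R] h IH'.
apply: IH => x hx; apply: (IH' _ h).
  by have := @gsize_leftopt (Game L R) x hx; lia.
by have := @gsize_rightopt (Game L R) x hx; lia.
Qed.

Lemma le_fuel_sufficient k k' g h :
  gsize g + gsize h <= minn k k' -> le_fuel k g h = le_fuel k' g h.
Proof.
elim: k k' g h => [|k IH] [|k'] g h //=; rewrite ?minnSS; try by have := gsize_gt0 g; lia.
by move=> hs; congr (~~ _ && ~~ _); apply: eq_in_has => x hx; apply: IH; gsize_lia.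
Qed.

Lemma game_leE g h : g <=G h =
  ~~ has (fun gl => h <=G gl) (leftopts g) && ~~ has (fun hr => hr <=G g) (rightopts h).
Proof.
have [s hs] : exists s, gsize g + gsize h = s.+1.
  by exists (gsize g + gsize h).-1; have := gsize_gt0 g; lia.
rewrite /game_le hs /=; congr (~~ _ && ~~ _); apply: eq_in_has => x hx /=;
  by apply: le_fuel_sufficient; gsize_lia.
Qed.

Lemma game_leP g h :
  reflect ({in leftopts g, forall gl, ~~ (h <=G gl)} /\
           {in rightopts h, forall hr, ~~ (hr <=G g)}) (g <=G h).
Proof. by rewrite game_leE; apply: (iffP andP) => -[/hasPn hl /hasPn hr]. Qed.

Lemma le_leftopt g h gl : g <=G h -> gl \in leftopts g -> ~~ (h <=G gl).
Proof. by case/game_leP => + _; apply. Qed.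

Lemma le_rightopt g h hr : g <=G h -> hr \in rightopts h -> ~~ (hr <=G g).
Proof. by case/game_leP => _; apply. Qed.

Lemma game_nle_opt g h : ~~ (g <=G h) ->
  (exists2 gl, gl \in leftopts g & h <=G gl) \/
  (exists2 hr, hr \in rightopts h & hr <=G g).
Proof. by rewrite game_leE negb_and !negbK => /orP[] /hasP; [left | right]. Qed.

Lemma game_le_refl g : g <=G g.
Proof.
elim/game_ind_in: g => L R IHL IHR; apply/game_leP; split=> x hx; apply/negP => hle.
- by have := le_leftopt hle hx; rewrite IHL.
- by have := le_rightopt hle hx; rewrite IHR.
Qed.

Lemma nle_leftopt g gl : gl \in leftopts g -> ~~ (g <=G gl).
Proof. by move=> hx; apply/negP => /le_leftopt/(_ hx); rewrite game_le_refl. Qed.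

Lemma nle_rightopt g gr : gr \in rightopts g -> ~~ (gr <=G g).
Proof. by move=> hx; apply/negP => /le_rightopt/(_ hx); rewrite game_le_refl. Qed.

Lemma game_le_trans g h k : g <=G h -> h <=G k -> g <=G k.
Proof.
move: g h k; apply: gsize_ind3 => g h k IH gh hk.
apply/game_leP; split=> x hx; apply/negP => hle.
- by have := le_leftopt gh hx; rewrite (IH h k x) //; gsize_lia.
- by have := le_rightopt hk hx; rewrite (IH x g h) //; gsize_lia.
Qed.

Lemma game_eq_refl g : g ==G g.
Proof. by rewrite /game_eq game_le_refl. Qed.

Lemma game_eq_sym g h : g ==G h -> h ==G g.
Proof. by rewrite /game_eq andbC. Qed.

Lemma game_eq_trans g h k : g ==G h -> h ==G k -> g ==G k.
Proof.
case/andP=> gh hg /andP[hk kh]; apply/andP.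
by split; [apply: game_le_trans gh hk | apply: game_le_trans kh hg].
Qed.

Lemma game_eq_le g h : g ==G h -> g <=G h. Proof. by case/andP. Qed.
Lemma game_eq_ge g h : g ==G h -> h <=G g. Proof. by case/andP. Qed.

Definition eq_opts (s t : seq game) :=
  {in s, forall x, exists2 y, y \in t & x ==G y} /\
  {in t, forall y, exists2 x, x \in s & x ==G y}.

Lemma game_eq_of_opts g h :
  eq_opts (leftopts g) (leftopts h) -> eq_opts (rightopts g) (rightopts h) -> g ==G h.
Proof.
move=> [gL hL] [gR hR]; apply/andP; split; apply/game_leP; split=> x hx; apply/negP => hle.
- have [y hy /game_eq_le xy] := gL x hx.
  by have := nle_leftopt hy; rewrite (game_le_trans hle xy).
- have [y hy /game_eq_le yx] := hR x hx.
  by have := nle_rightopt hy; rewrite (game_le_trans yx hle).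
- have [y hy /game_eq_ge xy] := hL x hx.
  by have := nle_leftopt hy; rewrite (game_le_trans hle xy).
- have [y hy /game_eq_ge yx] := gR x hx.
  by have := nle_rightopt hy; rewrite (game_le_trans yx hle).
Qed.

Lemma eq_opts_cat s1 s2 t1 t2 :
  eq_opts s1 t1 -> eq_opts s2 t2 -> eq_opts (s1 ++ s2) (t1 ++ t2).
Proof.
move=> [st1 ts1] [st2 ts2]; split=> x; rewrite mem_cat.
  by case/orP=> [/st1|/st2] [y hy xy]; exists y; rewrite ?mem_cat ?hy ?orbT.
by case/orP=> [/ts1|/ts2] [y hy xy]; exists y; rewrite ?mem_cat ?hy ?orbT.
Qed.

Lemma eq_opts_catC s t : eq_opts (s ++ t) (t ++ s).
Proof.
by split=> x hx; exists x; rewrite ?game_eq_refl // mem_cat orbC -mem_cat.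
Qed.

Lemma eq_opts_trans s t u : eq_opts s t -> eq_opts t u -> eq_opts s u.
Proof.
move=> [st ts] [tu ut]; split=> x /[dup] hx.
- case/st=> y /tu[z hz yz] xy; exists z => //; exact: game_eq_trans xy yz.
- case/ut=> y /ts[z hz zy] yx; exists z => //; exact: game_eq_trans zy yx.
Qed.

Lemma eq_opts_map (f f' : game -> game) s :
  {in s, forall x, f x ==G f' x} -> eq_opts (map f s) (map f' s).
Proof.
move=> ff'; split=> _ /mapP[x hx ->]; [exists (f' x) | exists (f x)];
  by rewrite ?map_f ?ff'.
Qed.

Lemma game_negE g :
  game_neg g = Game (map game_neg (rightopts g)) (map game_neg (leftopts g)).
Proof. by case: g. Qed.

Lemma leftopts_neg g : leftopts (game_neg g) = map game_neg (rightopts g).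
Proof. by case: g. Qed.

Lemma rightopts_neg g : rightopts (game_neg g) = map game_neg (leftopts g).
Proof. by case: g. Qed.

Lemma game_negK : involutive game_neg.
Proof.
by elim/game_ind_in => L R IHL IHR /=; rewrite -!map_comp !map_id_in.
Qed.

Lemma game_leN2 g h : (game_neg g <=G game_neg h) = (h <=G g).
Proof.
move: g h; apply: gsize_ind2 => g h IH.
rewrite game_leE [h <=G g]game_leE andbC leftopts_neg rightopts_neg !has_map.
by congr (~~ _ && ~~ _); apply: eq_in_has => x hx /=; rewrite IH //; gsize_lia.
Qed.

Lemma game_eqN g h : g ==G h -> game_neg g ==G game_neg h.
Proof. by rewrite /game_eq !game_leN2 andbC. Qed.

Lemma game_addE g h : g +G h =
  Game ([seq gl +G h | gl <- leftopts g] ++ [seq g +G hl | hl <- leftopts h])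
       ([seq gr +G h | gr <- rightopts g] ++ [seq g +G hr | hr <- rightopts h]).
Proof. by case: g; case: h. Qed.

Lemma leftopts_add g h : leftopts (g +G h) =
  [seq gl +G h | gl <- leftopts g] ++ [seq g +G hl | hl <- leftopts h].
Proof. by rewrite game_addE. Qed.

Lemma rightopts_add g h : rightopts (g +G h) =
  [seq gr +G h | gr <- rightopts g] ++ [seq g +G hr | hr <- rightopts h].
Proof. by rewrite game_addE. Qed.

Lemma leftopts_addP g h x : x \in leftopts (g +G h) ->
  (exists2 gl, gl \in leftopts g & x = gl +G h) \/
  (exists2 hl, hl \in leftopts h & x = g +G hl).
Proof. by rewrite leftopts_add mem_cat => /orP[] /mapP; [left | right]. Qed.

Lemma rightopts_addP g h x : x \in rightopts (g +G h) ->
  (exists2 gr, gr \in rightopts g & x = gr +G h) \/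
  (exists2 hr, hr \in rightopts h & x = g +G hr).
Proof. by rewrite rightopts_add mem_cat => /orP[] /mapP; [left | right]. Qed.

Lemma leftopt_addl g h gl : gl \in leftopts g -> gl +G h \in leftopts (g +G h).
Proof. by move=> hx; rewrite leftopts_add mem_cat (map_f (game_add^~ h)). Qed.

Lemma leftopt_addr g h hl : hl \in leftopts h -> g +G hl \in leftopts (g +G h).
Proof. by move=> hx; rewrite leftopts_add mem_cat (map_f (game_add g)) ?orbT. Qed.

Lemma rightopt_addl g h gr : gr \in rightopts g -> gr +G h \in rightopts (g +G h).
Proof. by move=> hx; rewrite rightopts_add mem_cat (map_f (game_add^~ h)). Qed.

Lemma rightopt_addr g h hr : hr \in rightopts h -> g +G hr \in rightopts (g +G h).
Proof. by move=> hx; rewrite rightopts_add mem_cat (map_f (game_add g)) ?orbT. Qed.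

Lemma game_add0r g : g +G game0 = g.
Proof.
by elim/game_ind_in: g => L R IHL IHR; rewrite game_addE /= !cats0 !map_id_in.
Qed.

Lemma game_add0l g : game0 +G g = g.
Proof. by elim/game_ind_in: g => L R IHL IHR; rewrite game_addE /= !map_id_in. Qed.

Lemma game_negD g h : game_neg (g +G h) = game_neg g +G game_neg h.
Proof.
move: g h; apply: gsize_ind2 => g h IH.
rewrite game_negE [RHS]game_addE leftopts_add rightopts_add !leftopts_neg !rightopts_neg.
rewrite !map_cat -!map_comp; congr (Game (_ ++ _) (_ ++ _)); apply/eq_in_map => x hx /=;
  by rewrite IH //; gsize_lia.
Qed.

Lemma game_leDr g h k : g <=G h -> g +G k <=G h +G k.
Proof.
move: g h k; apply: gsize_ind3 => g h k IH gh.
apply/game_leP; split=> x; [case/leftopts_addP | case/rightopts_addP];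
  move=> [y hy ->]; apply/negP => hle.
- case/game_nle_opt: (le_leftopt gh hy) => [[hl hhl yhl]|[yr hyr yrh]].
  + have := nle_leftopt (leftopt_addl k hhl).
    by rewrite (game_le_trans hle) // IH //; gsize_lia.
  + have := nle_rightopt (rightopt_addl k hyr).
    by rewrite (game_le_trans _ hle) // IH //; gsize_lia.
- have := nle_leftopt (leftopt_addr h hy).
  by rewrite (game_le_trans hle) // IH //; gsize_lia.
- case/game_nle_opt: (le_rightopt gh hy) => [[yl hyl gyl]|[gr hgr gry]].
  + have := nle_leftopt (leftopt_addl k hyl).
    by rewrite (game_le_trans hle) // IH //; gsize_lia.
  + have := nle_rightopt (rightopt_addl k hgr).
    by rewrite (game_le_trans _ hle) // IH //; gsize_lia.
- have := nle_rightopt (rightopt_addr g hy).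
  by rewrite (game_le_trans _ hle) // IH //; gsize_lia.
Qed.

Lemma game_addC g h : g +G h ==G h +G g.
Proof.
move: g h; apply: gsize_ind2 => g h IH.
apply: game_eq_of_opts; rewrite ?leftopts_add ?rightopts_add;
  apply: eq_opts_trans (eq_opts_catC _ _); apply: eq_opts_cat; apply: eq_opts_map => x hx;
  by apply: IH; gsize_lia.
Qed.

Lemma game_leDl g h k : g <=G h -> k +G g <=G k +G h.
Proof.
move=> gh; apply: game_le_trans (game_eq_le (game_addC _ _)) _.
exact: game_le_trans (game_leDr k gh) (game_eq_le (game_addC _ _)).
Qed.

Lemma game_eqD g g' h h' : g ==G g' -> h ==G h' -> g +G h ==G g' +G h'.
Proof.
case/andP=> gg' g'g /andP[hh' h'h]; apply/andP; split.
- exact: game_le_trans (game_leDr h gg') (game_leDl g' hh').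
- exact: game_le_trans (game_leDr h' g'g) (game_leDl g h'h).
Qed.

Lemma game_addA g h k : g +G (h +G k) ==G g +G h +G k.
Proof.
move: g h k; apply: gsize_ind3 => g h k IH.
apply: game_eq_of_opts; rewrite ?leftopts_add ?rightopts_add !map_cat -!map_comp catA;
  (apply: eq_opts_cat; first apply: eq_opts_cat); apply: eq_opts_map => x hx;
  by apply: IH; gsize_lia.
Qed.

Lemma game_addCA g h k : g +G (h +G k) ==G h +G (g +G k).
Proof.
apply: game_eq_trans (game_addA _ _ _) _.
apply: game_eq_trans (game_eqD (game_addC _ _) (game_eq_refl _)) _.
exact: game_eq_sym (game_addA _ _ _).
Qed.

Lemma game_pm_nle g h : h <=G g -> ~~ (game_pm g <=G h).
Proof.
move=> hg; apply/negP => /game_le_trans/(_ hg); apply/negP.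
by apply: nle_leftopt; rewrite inE.
Qed.

Lemma game_neg_pm g : game_neg (game_pm g) = game_pm g.
Proof. by rewrite /= game_negK. Qed.

Lemma game_pm_eq g h :
  {in leftopts g, forall x, ~~ (game_pm h <=G x)} -> (exists2 x, x \in leftopts g & h <=G x) ->
  {in leftopts (game_neg g), forall x, ~~ (game_pm h <=G x)} ->
  (exists2 x, x \in leftopts (game_neg g) & h <=G x) ->
  g ==G game_pm h.
Proof.
rewrite leftopts_neg => gL [x hx hx_ge] /= gR [_ /mapP[y hy ->] hy_ge].
apply/andP; split; apply/game_leP; split=> // z.
- rewrite inE => /eqP ->; apply/negP => hle.
  have := nle_rightopt hy; rewrite (game_le_trans _ hle) //.
  by rewrite -game_leN2 game_negK.
- rewrite inE => /eqP ->; apply/negP => hle.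
  by have := nle_leftopt hx; rewrite (game_le_trans hle hx_ge).
- move=> hz; have := gR _ (map_f game_neg hz).
  by rewrite -{1}game_neg_pm game_leN2.
Qed.

Lemma rightopts_nat m : rightopts (game_nat m) = [::].
Proof. by case: m. Qed.

Lemma game_le0nat m : game0 <=G game_nat m.
Proof. by apply/game_leP; rewrite rightopts_nat. Qed.

Lemma game_add1nat m : game_nat 1 +G game_nat m ==G game_nat m.+1.
Proof.
elim: m => [|m IH]; first by rewrite game_add0r game_eq_refl.
apply: game_eq_of_opts; last by rewrite rightopts_add !rightopts_nat.
rewrite leftopts_add !map_cons game_add0l /=; split=> x; rewrite !inE.
- by case/orP=> /eqP ->; exists (game_nat m.+1); rewrite ?inE ?game_eq_refl.
- by move=> /eqP ->; exists (game_nat m.+1); rewrite ?inE ?eqxx ?game_eq_refl.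
Qed.

(* [nstar c] is the sum of c copies of [*]; since [* + * = 0] it only depends
   on the parity of c. *)
Definition nstar (c : nat) : game := if odd c then game_star else game0.

Lemma game_add_star_nstar c : game_star +G nstar c ==G nstar c.+1.
Proof. by rewrite /nstar /=; case: odd. Qed.

Lemma game_le_nstar_nat c m : nstar c <=G game_nat m.+1.
Proof.
rewrite /nstar; case: odd; last exact: game_le0nat.
apply/game_leP; split=> // x; rewrite inE => /eqP ->.
by apply/negP => /le_leftopt/(_ (mem_head _ _)); rewrite game_le0nat.
Qed.

Lemma game_nle_nat_star_nat m : ~~ (game_nat m +G game_star <=G game_nat m).
Proof.
have hx : game_nat m +G game0 \in leftopts (game_nat m +G game_star).
  by apply: leftopt_addr; rewrite inE.
by have := nle_leftopt hx; rewrite game_add0r.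
Qed.

(* The value of a blue, b red and c untinted isolated vertices. *)
Definition isolated_value (a b c : nat) : game :=
  game_nat a +G (game_neg (game_nat b) +G nstar c).

Lemma isolated_value_no_red a c : isolated_value a 0 c = game_nat a +G nstar c.
Proof. by rewrite /isolated_value game_add0l. Qed.

Lemma isolated_valueSa a b c :
  game_nat 1 +G isolated_value a b c ==G isolated_value a.+1 b c.
Proof.
apply: game_eq_trans (game_addA _ _ _) _.
exact: game_eqD (game_add1nat a) (game_eq_refl _).
Qed.

Lemma isolated_valueSb a b c :
  game_neg (game_nat 1) +G isolated_value a b c ==G isolated_value a b.+1 c.
Proof.
apply: game_eq_trans (game_addCA _ _ _) _; apply: game_eqD (game_eq_refl _) _.
apply: game_eq_trans (game_addA _ _ _) _; apply: game_eqD (game_eq_refl _).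
by rewrite -game_negD; apply/game_eqN/game_add1nat.
Qed.

Lemma isolated_valueSc a b c :
  game_star +G isolated_value a b c ==G isolated_value a b c.+1.
Proof.
apply: game_eq_trans (game_addCA _ _ _) _; apply: game_eqD (game_eq_refl _) _.
apply: game_eq_trans (game_addCA _ _ _) _; apply: game_eqD (game_eq_refl _) _.
exact: game_add_star_nstar.
Qed.

Lemma game_le_pm_nat_nstar n : 0 < n ->
  game_neg (game_nat n) +G nstar n.-1 <=G game_pm (game_nat n +G nstar n).
Proof.
have no_leftopt m x : x \in leftopts (game_neg (game_nat m)) -> False.
  by rewrite leftopts_neg rightopts_nat.
case: n => // m _; rewrite /nstar oddS succnK; case: (odd m).
- rewrite game_add0r; apply/game_leP; split=> x.
  + case/leftopts_addP => [[y /no_leftopt] //|[y]]; rewrite inE => /eqP -> ->.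
    rewrite game_add0r; apply: game_pm_nle; apply: game_le_trans (game_le0nat _).
    by rewrite -[game0]/(game_neg game0) game_leN2 game_le0nat.
  + rewrite inE => /eqP ->; apply: nle_rightopt.
    by rewrite -{1}[game_neg _]game_add0r; apply: rightopt_addr; rewrite inE.
- rewrite game_add0r; apply/game_leP; split=> x; first by move/no_leftopt.
  rewrite inE => /eqP ->; rewrite game_negD -[game_neg game_star]/game_star.
  apply: nle_leftopt; rewrite -{1}[game_neg _]game_add0r.
  by apply: leftopt_addr; rewrite inE.
Qed.

Lemma eq_opts_neg s t : eq_opts s t -> eq_opts (map game_neg s) (map game_neg t).
Proof.
move=> [st ts]; split=> _ /mapP[x hx ->].
- by have [y hy xy] := st x hx; exists (game_neg y); rewrite ?map_f ?game_eqN.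
- by have [y hy yx] := ts x hx; exists (game_neg y); rewrite ?map_f ?game_eqN.
Qed.

Section Snort.
Variables (T : finType) (e : rel T).
Implicit Types (V L B R X : {set T}) (v z : T).

(* The vertices left after a move on v by the player whose opponent's tint is
   X: v itself and its neighbours tinted X disappear. *)
Definition survivors V X v := (V :\ v) :\: (nbhd e V v :&: X).

Definition left_opt V B R v := snort e (survivors V R v) (B :|: nbhd e V v) R.
Definition right_opt V B R v := snort e (survivors V B v) B (R :|: nbhd e V v).

Lemma survivors_sub V X v : survivors V X v \subset V :\ v.
Proof. exact: subsetDl. Qed.

Lemma card_survivors V X v : v \in V -> #|survivors V X v| < #|V|.
Proof.
move=> hv; apply: leq_ltn_trans (subset_leq_card (survivors_sub V X v)) _.
exact: proper_card (properD1 hv).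
Qed.

Lemma snort_fuel_sufficient k k' V B R : #|V| <= k -> #|V| <= k' ->
  snort_fuel e k V B R = snort_fuel e k' V B R.
Proof.
elim: k k' V B R => [|k IH] [|k'] V B R; rewrite ?leqn0 //.
- by move=> /eqP/cards0_eq -> _ /=; rewrite enum_set0.
- by move=> _ /eqP/cards0_eq -> /=; rewrite enum_set0.
move=> hk hk' /=; congr Game; apply/eq_in_map => v; rewrite mem_filter mem_enum;
  case/andP=> _ hv; apply: IH; have := card_survivors R hv;
  have := card_survivors B hv; rewrite /survivors; lia.
Qed.

Lemma snortE V B R : snort e V B R =
  Game [seq left_opt V B R v | v <- enum V & v \notin R]
       [seq right_opt V B R v | v <- enum V & v \notin B].
Proof.
rewrite /snort; case hV: #|V| => [|k]; first by move/cards0_eq: hV => ->; rewrite enum_set0.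
rewrite /=; congr Game; apply/eq_in_map => v; rewrite mem_filter mem_enum;
  case/andP=> _ hv; apply: snort_fuel_sufficient; have := card_survivors R hv;
  have := card_survivors B hv; rewrite /survivors hV; lia.
Qed.

Lemma snort_leftoptsP V B R x :
  reflect (exists2 v, v \in V :\: R & x = left_opt V B R v) (x \in leftopts (snort e V B R)).
Proof.
by rewrite snortE; apply: (iffP mapP) => -[v hv ->]; exists v;
  move: hv; rewrite // mem_filter mem_enum inE.
Qed.

Lemma snort_rightoptsP V B R x :
  reflect (exists2 v, v \in V :\: B & x = right_opt V B R v) (x \in rightopts (snort e V B R)).
Proof.
by rewrite snortE; apply: (iffP mapP) => -[v hv ->]; exists v;
  move: hv; rewrite // mem_filter mem_enum inE.
Qed.

Lemma snort_swap V B R : snort e V R B = game_neg (snort e V B R).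
Proof.
have [k] := ubnP #|V|; elim: k V B R => // k IH V B R /ltnSE hk.
rewrite (snortE V R B) (snortE V B R) /= -!map_comp; congr Game; apply/eq_in_map => v;
  rewrite mem_filter mem_enum => /andP[_ hv] /=; rewrite /left_opt /right_opt IH //;
  by have := card_survivors R hv; have := card_survivors B hv; lia.
Qed.

Lemma eq_snort V B R B' R' : V :&: B = V :&: B' -> V :&: R = V :&: R' ->
  snort e V B R = snort e V B' R'.
Proof.
have [k] := ubnP #|V|; elim: k V B R B' R' => // k IH V B R B' R' /ltnSE hk hB hR.
have mem_tint (X X' : {set T}) v : V :&: X = V :&: X' -> v \in V -> (v \in X) = (v \in X').
  by move=> /setP/(_ v) hX hv; rewrite !inE hv in hX.
have sub_tint (W X X' : {set T}) : W \subset V -> V :&: X = V :&: X' -> W :&: X = W :&: X'.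
  by move=> /setIidPl <- hX; rewrite -!setIA hX.
have hN v : nbhd e V v \subset V by apply/subsetP => x; rewrite inE => /andP[].
rewrite !snortE; congr Game.
- rewrite (eq_in_filter (a2 := fun v => v \notin R')); last first.
    by move=> v; rewrite mem_enum => hv; rewrite (mem_tint _ _ _ hR).
  apply/eq_in_map => v; rewrite mem_filter mem_enum => /andP[_ hv].
  have hS : survivors V R v = survivors V R' v by rewrite /survivors (sub_tint _ _ _ (hN v) hR).
  have hsub := subset_trans (survivors_sub V R' v) (subD1set V v).
  rewrite /left_opt hS; apply: IH.
  + by have := card_survivors R' hv; lia.
  + by rewrite !setIUr (sub_tint _ _ _ hsub hB).
  + by rewrite (sub_tint _ _ _ hsub hR).
- rewrite (eq_in_filter (a2 := fun v => v \notin B')); last first.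
    by move=> v; rewrite mem_enum => hv; rewrite (mem_tint _ _ _ hB).
  apply/eq_in_map => v; rewrite mem_filter mem_enum => /andP[_ hv].
  have hS : survivors V B v = survivors V B' v by rewrite /survivors (sub_tint _ _ _ (hN v) hB).
  have hsub := subset_trans (survivors_sub V B' v) (subD1set V v).
  rewrite /right_opt hS; apply: IH.
  + by have := card_survivors B' hv; lia.
  + by rewrite (sub_tint _ _ _ hsub hB).
  + by rewrite !setIUr (sub_tint _ _ _ hsub hR).
Qed.

Lemma rightopts_snort V B R :
  rightopts (snort e V B R) = map game_neg (leftopts (snort e V R B)).
Proof. by rewrite (snort_swap V R B) rightopts_neg. Qed.

Lemma eq_opts_snort_union V1 V2 B R :
  {in V1, forall v, left_opt (V1 :|: V2) B R v ==G left_opt V1 B R v +G snort e V2 B R} ->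
  {in V2, forall v, left_opt (V1 :|: V2) B R v ==G snort e V1 B R +G left_opt V2 B R v} ->
  eq_opts (leftopts (snort e (V1 :|: V2) B R)) (leftopts (snort e V1 B R +G snort e V2 B R)).
Proof.
move=> h1 h2; rewrite leftopts_add; split=> [x /snort_leftoptsP [v]|y].
- rewrite !inE => /andP[hvR /orP[hv|hv]] ->.
  + exists (left_opt V1 B R v +G snort e V2 B R); last exact: h1.
    rewrite mem_cat (map_f (game_add^~ _)) //.
    by apply/snort_leftoptsP; exists v; rewrite ?inE ?hvR.
  + exists (snort e V1 B R +G left_opt V2 B R v); last exact: h2.
    rewrite mem_cat (map_f (game_add _)) ?orbT //.
    by apply/snort_leftoptsP; exists v; rewrite ?inE ?hvR.
- rewrite mem_cat => /orP[] /mapP[_ /snort_leftoptsP [v + ->] ->];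
    rewrite inE => /andP[hvR hv]; exists (left_opt (V1 :|: V2) B R v);
    try by [apply: h1 | apply: h2].
  all: by apply/snort_leftoptsP; exists v; rewrite // !inE hvR hv ?orbT.
Qed.

Hypothesis e_sym : symmetric e.

Lemma nbhd_union V1 V2 v : {in V1 & V2, forall x y, ~~ e x y} -> v \in V1 ->
  nbhd e (V1 :|: V2) v = nbhd e V1 v.
Proof.
move=> hn hv; apply/setP => x; rewrite !inE andb_orl.
by case hx: (x \in V2); rewrite ?orbF // (negbTE (hn _ _ hv hx)) orbF.
Qed.

Lemma survivors_union V1 V2 X v : [disjoint V1 & V2] ->
  {in V1 & V2, forall x y, ~~ e x y} -> v \in V1 ->
  survivors (V1 :|: V2) X v = survivors V1 X v :|: V2.
Proof.
move=> hd hn hv; apply/setP => x; rewrite /survivors nbhd_union // !inE.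
case hx: (x \in V2); last by rewrite !orbF.
rewrite (negbTE (hn _ _ hv hx)) andbF !orbT /= andbT.
by apply: contraTneq hx => ->; rewrite (disjointFr hd hv).
Qed.

Lemma snort_split V1 V2 B R : [disjoint V1 & V2] -> {in V1 & V2, forall x y, ~~ e x y} ->
  snort e (V1 :|: V2) B R ==G snort e V1 B R +G snort e V2 B R.
Proof.
have [k] := ubnP #|V1 :|: V2|; elim: k V1 V2 B R => // k IH V1 V2 B R /ltnSE hk hd hn.
have split_left W1 W2 B' R' v : W1 :|: W2 = V1 :|: V2 -> [disjoint W1 & W2] ->
    {in W1 & W2, forall x y, ~~ e x y} -> v \in W1 ->
    left_opt (W1 :|: W2) B' R' v ==G left_opt W1 B' R' v +G snort e W2 B' R'.
  move=> hW hdW hnW hv; rewrite /left_opt nbhd_union // survivors_union //.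
  have hsub := subset_trans (survivors_sub W1 R' v) (subD1set W1 v).
  apply: game_eq_trans (IH _ _ _ _ _ _ _) _.
  - have hvW : v \in W1 :|: W2 by rewrite inE hv.
    by rewrite -survivors_union //; apply: leq_trans (card_survivors R' hvW) _; rewrite hW.
  - exact: disjointWl hsub hdW.
  - by move=> x y /(subsetP hsub); apply: hnW.
  apply: game_eqD (game_eq_refl _) _; rewrite (eq_snort (B' := B') (R' := R')) ?game_eq_refl //.
  apply/setP => x; rewrite !inE; case hx: (x \in W2) => //=.
  by rewrite (negbTE (hnW _ _ hv hx)) andbF orbF.
have hd' : [disjoint V2 & V1] by rewrite disjoint_sym.
have hn' : {in V2 & V1, forall x y, ~~ e x y} by move=> x y hx hy; rewrite e_sym hn.
have left_half B' R' : eq_opts (leftopts (snort e (V1 :|: V2) B' R'))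
                               (leftopts (snort e V1 B' R' +G snort e V2 B' R')).
  apply: eq_opts_snort_union => v hv; first exact: split_left.
  rewrite setUC; apply: game_eq_trans (game_addC _ _).
  by apply: split_left; rewrite // setUC.
apply: game_eq_of_opts; first exact: left_half.
rewrite rightopts_snort (snort_swap V1 R B) (snort_swap V2 R B) -game_negD rightopts_neg.
exact/eq_opts_neg/left_half.
Qed.

Lemma snort0 B R : snort e set0 B R = game0.
Proof. by rewrite snortE enum_set0. Qed.

Lemma snort1 B R v : snort e [set v] B R =
  Game (if v \in R then [::] else [:: game0]) (if v \in B then [::] else [:: game0]).
Proof.
have surv1 X : survivors [set v] X v = set0.
  by apply/setP => x; rewrite !inE andbC; case: eqP.
rewrite snortE enum_set1 /=.
by case: (v \in R); case: (v \in B); rewrite /= /left_opt /right_opt ?surv1 ?snort0.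
Qed.

Lemma snort_indep V B R : {in V &, forall x y, ~~ e x y} -> V :&: B :&: R = set0 ->
  snort e V B R ==G isolated_value #|V :&: B| #|V :&: R| #|V :\: (B :|: R)|.
Proof.
have [k] := ubnP #|V|; elim: k V => // k IH V /ltnSE hk hind hBR.
have [->|[v hv]] := set_0Vmem V; first by rewrite snort0 !set0I set0D !cards0.
have card_split X : #|V :&: X| = (v \in X) + #|(V :\ v) :&: X|.
  by rewrite (cardsD1 v) inE hv setIDAC.
have hk' : #|V :\ v| < k by rewrite (cardsD1 v V) hv in hk.
have IHv : snort e (V :\ v) B R ==G isolated_value #|(V :\ v) :&: B| #|(V :\ v) :&: R|
                                      #|(V :\ v) :\: (B :|: R)|.
  apply: IH => //; first by move=> x y /setD1P[_ hx] /setD1P[_ hy]; apply: hind.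
  by apply/eqP; rewrite -subset0 -hBR; do 2 apply: setSI; apply: subD1set.
rewrite -{1}(setD1K hv) !setDE !card_split -!setDE.
apply: game_eq_trans (snort_split _ _ _ _) _.
- by rewrite disjoints1 !inE eqxx.
- by move=> x y; rewrite inE => /eqP -> /setD1P[_ hy]; apply: hind.
rewrite snort1 !inE; case hB: (v \in B); case hR: (v \in R) => /=.
- by move/setP/(_ v): hBR; rewrite !inE hv hB hR.
- exact: game_eq_trans (game_eqD (game_eq_refl _) IHv) (isolated_valueSa _ _ _).
- exact: game_eq_trans (game_eqD (game_eq_refl _) IHv) (isolated_valueSb _ _ _).
- exact: game_eq_trans (game_eqD (game_eq_refl _) IHv) (isolated_valueSc _ _ _).
Qed.

Lemma snort_indep_untinted V B R : {in V &, forall x y, ~~ e x y} ->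
  V :&: B = set0 -> V :&: R = set0 -> snort e V B R ==G nstar #|V|.
Proof.
move=> hind hB hR; have := snort_indep (B := B) (R := R) hind.
rewrite hB hR set0I cards0.
rewrite isolated_value_no_red game_add0l (setDidPl _); first by apply.
by rewrite -setI_eq0 setIUr hB hR setU0.
Qed.

Hypothesis e_irr : irreflexive e.

Section Star.
Variables (z : T) (L B R : {set T}).
Hypotheses (hzL : z \notin L) (hzB : z \in B) (hzR : z \notin R).
Hypotheses (hzl : {in L, forall l, e z l}) (hind : {in L &, forall x y, ~~ e x y}).
Hypothesis hL : [disjoint L & B :|: R].

Let hLB : L :&: B = set0 := disjoint_setI0 (disjointWr (subsetUl B R) hL).
Let hLR : L :&: R = set0 := disjoint_setI0 (disjointWr (subsetUr B R) hL).

Lemma nbhd_star_centre : nbhd e (z |: L) z = L.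
Proof.
apply/setP => x; rewrite !inE; case: eqP => [->|_]; first by rewrite e_irr (negbTE hzL).
by case hx: (x \in L); rewrite // hzl.
Qed.

Lemma nbhd_star_leaf l : l \in L -> nbhd e (z |: L) l = [set z].
Proof.
move=> hl; apply/setP => x; rewrite !inE; case: eqP => [->|_ /=]; first by rewrite e_sym hzl.
by case hx: (x \in L); rewrite //= (negbTE (hind hl hx)).
Qed.

Lemma star_centre_left_opt : left_opt (z |: L) B R z ==G game_nat #|L|.
Proof.
rewrite /left_opt /survivors nbhd_star_centre setU1K // hLR setD0.
have := @snort_indep L (B :|: L) R hind.
rewrite setIUr hLB setIid set0U hLR cards0 isolated_value_no_red.
suff -> : L :\: (B :|: L :|: R) = set0 by rewrite cards0 game_add0r; apply.
by apply/eqP; rewrite setD_eq0; apply/subsetP => x hx; rewrite !inE hx orbT.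
Qed.

Lemma star_leaf_left_opt l : l \in L ->
  left_opt (z |: L) B R l = snort e (z |: (L :\ l)) (B :|: [set z]) R.
Proof.
move=> hl; rewrite /left_opt /survivors nbhd_star_leaf //; congr snort.
apply/setP => x; rewrite !inE; case: eqP => [->|_] //=.
by rewrite hzR andbT; apply: contraNneq hzL => ->.
Qed.

Lemma star_leaf_right_opt l : l \in L ->
  right_opt (z |: L) B R l ==G nstar #|L :\ l|.
Proof.
move=> hl; have sub0 X : L :&: X = set0 -> (L :\ l) :&: X = set0.
  by move=> hX; apply/eqP; rewrite -subset0 -hX setSI ?subD1set.
have hS : survivors (z |: L) B l = L :\ l.
  rewrite /survivors nbhd_star_leaf //; apply/setP => x; rewrite !inE.
  by case: (eqVneq x z) => [->|_]; rewrite ?hzB ?(negbTE hzL) ?andbF.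
rewrite /right_opt hS nbhd_star_leaf //; apply: snort_indep_untinted.
- by move=> x y /setD1P[_ hx] /setD1P[_ hy]; apply: hind.
- exact: sub0 hLB.
have hLz : L :&: [set z] = set0 by apply: disjoint_setI0; rewrite disjoint_sym disjoints1.
by rewrite setIUr (sub0 _ hLR) (sub0 _ hLz) setU0.
Qed.

End Star.

Lemma snort_star_le m z L B R : z \notin L -> z \in B -> z \notin R ->
  {in L, forall l, e z l} -> {in L &, forall x y, ~~ e x y} -> [disjoint L & B :|: R] ->
  #|L| = m.+1 -> snort e (z |: L) B R <=G game_nat m.+1 +G game_star.
Proof.
elim/ltn_ind: m => m IH in L B *; move=> hzL hzB hzR hzl hind hL hcard.
apply/game_leP; split=> x.
- case/snort_leftoptsP => v; rewrite !inE => /andP[_ /orP[/eqP ->|hv]] ->; apply/negP => hle.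
  + have := game_le_trans hle (game_eq_le (star_centre_left_opt hzL hzl hind hL)).
    by rewrite hcard (negbTE (game_nle_nat_star_nat _)).
  rewrite (star_leaf_left_opt B hzL hzR hzl hind hv) in hle.
  have hcard' : #|L :\ v| = m by move: hcard; rewrite (cardsD1 v) hv => -[].
  case: m IH hcard hcard' hle => [|m] IH hcard hcard' hle.
    move/cards0_eq: hcard' hle => ->; rewrite setU0 snort1 !inE (negbTE hzR) eqxx orbT.
    exact/negP/(game_nle_nat_star_nat 1).
  have hz : z \notin L :\ v by rewrite !inE (negbTE hzL) andbF.
  have hsub := subD1set L v.
  have hopt : snort e (z |: L :\ v) (B :|: [set z]) R <=G game_nat m.+1 +G game_star.
    apply: IH => //.
    - by rewrite !inE eqxx orbT.
    - by move=> l /(subsetP hsub); apply: hzl.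
    - by move=> x1 y1 /(subsetP hsub) hx /(subsetP hsub); apply: hind.
    apply: disjointWl hsub _; rewrite setUAC -setI_eq0 setIUr (disjoint_setI0 hL) set0U.
    by rewrite setI_eq0 disjoint_sym disjoints1.
  have hnext : game_nat m.+1 +G game_star \in leftopts (game_nat m.+2 +G game_star).
    by apply: leftopt_addl; rewrite inE.
  by have := nle_leftopt hnext; rewrite (game_le_trans hle hopt).
- case/rightopts_addP => [[y]|[y]]; first by rewrite rightopts_nat.
  rewrite inE => /eqP -> ->; rewrite game_add0r.
  have /set0Pn [l hl] : L != set0 by rewrite -card_gt0 hcard.
  have hlB : l \notin B by apply: contraFN (disjointFr hL hl); rewrite inE => ->.
  have hY : right_opt (z |: L) B R l \in rightopts (snort e (z |: L) B R).
    by apply/snort_rightoptsP; exists l; rewrite // !inE hl orbT hlB.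
  apply/negP => hle; have := le_rightopt hle hY.
  by rewrite (game_le_trans (game_eq_le (star_leaf_right_opt hzL hzB hzl hind hL hl)))
    ?game_le_nstar_nat.
Qed.

End Snort.

Section TwoStars.
Variable n : nat.
Hypothesis n_gt0 : 0 < n.
Local Notation vertex := (bool * 'I_n.+1)%type.
Local Notation e := (two_stars_edge n).
Implicit Types (c : bool) (i : 'I_n.+1).

Definition centre c : vertex := (c, ord0).
Definition leaves c : {set vertex} := [set x | (x.1 == c) && (x.2 != ord0)].
Definition hot_value : game := game_nat n +G nstar n.

Lemma two_stars_edgeE c c' i i' : e (c, i) (c', i') =
  if c == c' then (i == ord0) != (i' == ord0) else (i == ord0) && (i' == ord0).
Proof. by rewrite /two_stars_edge -!val_eqE; case: c; case: c'; rewrite /= ?orbF. Qed.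

Lemma two_stars_edge_sym : symmetric e.
Proof. by move=> [c i] [c' i']; rewrite !two_stars_edgeE eq_sym andbC; case: eqP => // _; rewrite eq_sym. Qed.

Lemma two_stars_edge_irr : irreflexive e.
Proof.
by move=> [c i]; rewrite two_stars_edgeE eqxx /= eqxx.
Qed.

Lemma card_leaves c : #|leaves c| = n.
Proof.
have -> : leaves c = setX [set c] [set~ ord0] by apply/setP => -[c' i]; rewrite !inE.
by rewrite cardsX cards1 cardsC1 card_ord mul1n.
Qed.

Lemma card_leavesD1 c i : i != ord0 -> #|leaves c :\ (c, i)| = n.-1.
Proof.
move=> hi; have := cardsD1 (c, i) (leaves c).
by rewrite card_leaves !inE eqxx hi => E; rewrite [in RHS]E.
Qed.

Lemma leaves_indep (X : {set vertex}) : {in X, forall x, x.2 != ord0} ->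
  {in X &, forall x y, ~~ e x y}.
Proof.
move=> hX [c i] [c' i'] /hX hi /hX hi'; rewrite two_stars_edgeE (negbTE hi) (negbTE hi').
by case: eqP.
Qed.

Definition position c := snort e setT [set centre c] [set centre (~~ c)].
Local Notation position_left_opt c := (left_opt e setT [set centre c] [set centre (~~ c)]).

Ltac vertex_cases c :=
  apply/setP => -[[] [[|?] ?]]; rewrite !inE ?two_stars_edgeE ?xpair_eqE ?eqxx /=; destruct c.

Ltac leaf_cases c i hi :=
  apply/setP; let b := fresh "b" in let k := fresh "k" in let E := fresh "E" in
  intros [b k]; rewrite !inE ?two_stars_edgeE ?xpair_eqE ?eqxx /=;
  case: (eqVneq k i) => [E|?];
    [rewrite ?E | case: (eqVneq k ord0) => [E|?]; [rewrite ?E|]];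
  destruct b, c; rewrite /= ?eqxx ?(negbTE hi).

Lemma centre_left_opt c : position_left_opt c (centre c) ==G hot_value.
Proof.
have hN : nbhd e setT (centre c) = centre (~~ c) |: leaves c by vertex_cases c.
have hS : survivors e setT [set centre (~~ c)] (centre c) = leaves c :|: leaves (~~ c).
  by rewrite /survivors hN; clear hN; vertex_cases c.
rewrite /left_opt hN hS; clear hN hS.
have hind : {in leaves c :|: leaves (~~ c) &, forall x y, ~~ e x y}.
  by apply: leaves_indep => x; rewrite !inE => /orP[] /andP[].
have := snort_indep two_stars_edge_sym (B := centre c |: (centre (~~ c) |: leaves c))
  (R := [set centre (~~ c)]) hind.
rewrite (_ : _ :&: (centre c |: _) = leaves c); last by vertex_cases c.
rewrite (_ : (leaves c :|: _) :&: [set centre (~~ c)] = set0); last by vertex_cases c.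
rewrite (_ : _ :\: _ = leaves (~~ c)); last by vertex_cases c.
rewrite !card_leaves cards0 isolated_value_no_red; apply.
by vertex_cases c.
Qed.

Lemma own_leaf_left_opt c i : i != ord0 ->
  position_left_opt c (c, i) = snort e (setT :\ (c, i)) [set centre c] [set centre (~~ c)].
Proof.
move=> hi; have hN : nbhd e setT (c, i) = [set centre c] by leaf_cases c i hi.
rewrite /left_opt hN setUid /survivors; congr snort; rewrite hN; clear hN.
by leaf_cases c i hi.
Qed.

Lemma own_leaf_reply c i : i != ord0 ->
  right_opt e (setT :\ (c, i)) [set centre c] [set centre (~~ c)] (centre (~~ c)) ==G
  game_neg (game_nat n) +G nstar n.-1.
Proof.
move=> hi.
have hN : nbhd e (setT :\ (c, i)) (centre (~~ c)) = centre c |: leaves (~~ c).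
  by leaf_cases c i hi.
have hS : survivors e (setT :\ (c, i)) [set centre c] (centre (~~ c)) =
          (leaves c :\ (c, i)) :|: leaves (~~ c).
  by rewrite /survivors hN; clear hN; leaf_cases c i hi.
rewrite /right_opt hN hS; clear hN hS.
have hind : {in (leaves c :\ (c, i)) :|: leaves (~~ c) &, forall x y, ~~ e x y}.
  by apply: leaves_indep => x; rewrite !inE => /orP[/andP[_] | ] /andP[].
have := snort_indep two_stars_edge_sym (B := [set centre c])
  (R := [set centre (~~ c)] :|: (centre c |: leaves (~~ c))) hind.
rewrite (_ : _ :&: [set centre c] = set0) ?set0I; last by leaf_cases c i hi.
rewrite (_ : (_ :|: _) :&: (_ :|: _) = leaves (~~ c)); last by leaf_cases c i hi.
rewrite (_ : _ :\: _ = leaves c :\ (c, i)); last by leaf_cases c i hi.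
by rewrite card_leavesD1 // card_leaves cards0 /isolated_value game_add0l; apply.
Qed.

Lemma own_leaf_left_opt_nge c i : i != ord0 ->
  ~~ (game_pm hot_value <=G position_left_opt c (c, i)).
Proof.
move=> hi; rewrite own_leaf_left_opt //; apply/negP => hle.
have hY : right_opt e (setT :\ (c, i)) [set centre c] [set centre (~~ c)] (centre (~~ c))
          \in rightopts (snort e (setT :\ (c, i)) [set centre c] [set centre (~~ c)]).
  apply/snort_rightoptsP; exists (centre (~~ c)) => //.
  by rewrite !inE /centre xpair_eqE; case: (c); rewrite /= ?(negbTE hi).
have := le_rightopt hle hY.
by rewrite (game_le_trans (game_eq_le (own_leaf_reply c hi))) ?game_le_pm_nat_nstar.
Qed.

Lemma other_leaf_left_opt c j : j != ord0 ->
  position_left_opt c (~~ c, j) = snort e ((centre c |: leaves c) :|: (leaves (~~ c) :\ (~~ c, j)))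
                                      [set centre c; centre (~~ c)] [set centre (~~ c)].
Proof.
move=> hj; have hN : nbhd e setT (~~ c, j) = [set centre (~~ c)] by leaf_cases c j hj.
rewrite /left_opt hN /survivors; congr snort; rewrite hN; clear hN.
by leaf_cases c j hj.
Qed.

Lemma other_leaf_left_opt_le c j : j != ord0 -> position_left_opt c (~~ c, j) <=G hot_value.
Proof.
move=> hj; rewrite other_leaf_left_opt //.
apply: game_le_trans (game_eq_le (snort_split two_stars_edge_sym _ _ _ _)) _.
- by rewrite -setI_eq0; apply/eqP; leaf_cases c j hj.
- move=> [b k] [b' k'] hx /setD1P[_]; rewrite !inE /= => /andP[/eqP -> /negbTE hk'].
  have -> : b = c by case/setU1P: hx => [[->] //|]; rewrite inE => /andP[/eqP].
  by rewrite two_stars_edgeE hk' andbF; case: (c).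
have hstar : snort e (centre c |: leaves c) [set centre c; centre (~~ c)] [set centre (~~ c)]
             <=G game_nat n +G game_star.
  rewrite -[X in game_nat X](prednK n_gt0).
  apply: (snort_star_le two_stars_edge_sym two_stars_edge_irr).
  - by rewrite inE /= eqxx.
  - by rewrite !inE eqxx.
  - by rewrite inE /centre xpair_eqE; case: (c).
  - by move=> [b k]; rewrite inE /= => /andP[/eqP -> hk]; rewrite two_stars_edgeE eqxx (negbTE hk).
  - by apply: leaves_indep => x; rewrite inE => /andP[].
  - by rewrite -setI_eq0; apply/eqP; vertex_cases c.
  - by rewrite prednK // card_leaves.
have hrest : snort e (leaves (~~ c) :\ (~~ c, j)) [set centre c; centre (~~ c)]
               [set centre (~~ c)] ==G nstar n.-1.
  rewrite -(card_leavesD1 (~~ c) hj); apply: (snort_indep_untinted two_stars_edge_sym).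
  - by apply: leaves_indep => x; rewrite !inE => /andP[_ /andP[]].
  - by leaf_cases c j hj.
  - by leaf_cases c j hj.
apply: game_le_trans (game_leDr _ hstar) _.
apply: game_le_trans (game_leDl _ (game_eq_le hrest)) _.
apply/game_eq_le/(game_eq_trans (game_eq_sym (game_addA _ _ _)))/game_eqD.
  exact: game_eq_refl.
by rewrite -{2}(prednK n_gt0); apply: game_add_star_nstar.
Qed.

Lemma position_left_opts_nge c :
  {in leftopts (position c), forall x, ~~ (game_pm hot_value <=G x)}.
Proof.
move=> _ /snort_leftoptsP [[b k] + ->]; rewrite !inE /centre xpair_eqE andbT.
have [-> | hk] := eqVneq k ord0; rewrite ?andbT ?andbF => hb.
  have -> : b = c by move: hb; case: b; case: (c).
  by apply: game_pm_nle; apply/game_eq_le/centre_left_opt.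
have [-> | /negbTE hbc] := eqVneq b c; first exact: own_leaf_left_opt_nge.
have -> : b = ~~ c by move: hbc; case: b; case: (c).
by apply: game_pm_nle; apply: other_leaf_left_opt_le.
Qed.

Lemma position_left_opt_ge c :
  exists2 x, x \in leftopts (position c) & hot_value <=G x.
Proof.
exists (position_left_opt c (centre c)); last exact/game_eq_ge/centre_left_opt.
by apply/snort_leftoptsP; exists (centre c); rewrite // !inE /centre xpair_eqE; case: (c).
Qed.

End TwoStars.

Theorem lemma5 (n : nat) (hn : 1 <= n) :
  game_eq (two_stars_value n)
    (if odd n then game_pm (game_add (game_nat n) game_star)
     else game_pm (game_nat n)).
Proof.
have -> : (if odd n then game_pm (game_nat n +G game_star) else game_pm (game_nat n)) =
          game_pm (hot_value n) by rewrite /hot_value /nstar; case: odd; rewrite ?game_add0r.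
have neg_position : game_neg (position n true) = position n false by rewrite -snort_swap.
apply: game_pm_eq; rewrite ?neg_position.
- exact: position_left_opts_nge.
- exact: position_left_opt_ge.
- exact: position_left_opts_nge.
- exact: position_left_opt_ge.
Qed.
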